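(* Let $X=\{x\in\{0,1\}^n: Ax\le b\}$ for a real matrix $A$ and vector $b$, and assume the standing assumptions. Suppose $\lambda_i(\pi)\neq0$ for some $i\in I$. Define the target inequality $\tilde\pi^\top x\le\tilde\pi_0$ by $\tilde\pi=e_i,\ \tilde\pi_0=0$ (i.e. $x_i\le 0$) if $i\in S^+(\pi)$, and $\tilde\pi=-e_i,\ \tilde\pi_0=-1$ (i.e. $x_i\ge 1$) if $i\in S^-(\pi)$. Let $$\gamma^*=\min\Big\{\pi_0x_0-\pi^\top x:\ (x,x_0)\in\mathbb{R}^n\times\mathbb{R}_{\ge0},\ Ax-bx_0\le0,\ 0\le x_j\le x_0\ \forall j,\ \big(x_j\le 0 \text{ or } x_j\ge x_0\big)\ \forall j\in I,\ \tilde\pi_0x_0-\tilde\pi^\top x=-1\Big\}.$$ Then $\gamma^*=|\lambda_i(\pi)|$.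
   Context: Let $n\ge1$, $I=\{1,\dots,n\}$, $e_i$ the $i$-th unit vector. Standing assumptions: (a) $\pi^\top x\le\pi_0$ is valid for $X$ and $\pi_0=\max_{x\in X}\pi^\top x$; (b) for every $i\in I$ there exist $x,x'\in X$ with $x_i=0$, $x'_i=1$. $\lambda_i(\pi):=\max_{x\in X}\{\pi^\top x:x_i=0\}-\max_{x\in X}\{\pi^\top x:x_i=1\}$; $S^-(\pi)=\{i:\lambda_i(\pi)<0\}$, $S^+(\pi)=\{i:\lambda_i(\pi)>0\}$. *)

(* the statement is purely order-algebraic, stated over an
   arbitrary real field R (covers the real numbers). *)
From HB Require Import structures.
From mathcomp Require Import all_boot all_order all_algebra.
Set Implicit Arguments. Unset Strict Implicit. Unset Printing Implicit Defensive.
Import Order.TTheory GRing.Theory Num.Theory.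
Local Open Scope ring_scope.

Section Defs.
Variable R : realFieldType.

Definition dotv (n : nat) (p x : 'cV[R]_n) : R := \sum_(j < n) p j 0 * x j 0.

Definition unitv (n : nat) (i : 'I_n) : 'cV[R]_n :=
  \col_(j < n) (if j == i then 1 else 0).

Definition inX (m n : nat) (A : 'M[R]_(m, n)) (b : 'cV[R]_m) (x : 'cV[R]_n) : Prop :=
  (forall j : 'I_n, x j 0 = 0 \/ x j 0 = 1) /\
  (forall k : 'I_m, (A *m x) k 0 <= b k 0).

Definition is_max_on (n : nat) (P : 'cV[R]_n -> Prop) (p : 'cV[R]_n) (v : R) : Prop :=
  (exists2 x, P x & dotv p x = v) /\ (forall x, P x -> dotv p x <= v).

Definition is_lambda (m n : nat) (A : 'M[R]_(m, n)) (b : 'cV[R]_m)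
    (p : 'cV[R]_n) (i : 'I_n) (lam : R) : Prop :=
  exists M0 M1,
    [/\ is_max_on (fun x => inX A b x /\ x i 0 = 0) p M0,
        is_max_on (fun x => inX A b x /\ x i 0 = 1) p M1 &
        lam = M0 - M1].

Definition pit (n : nat) (i : 'I_n) (lam : R) : 'cV[R]_n :=
  if 0 < lam then unitv i else - unitv i.
Definition pit0 (lam : R) : R := if 0 < lam then 0 else -1.

Definition feasible (m n : nat) (A : 'M[R]_(m, n)) (b : 'cV[R]_m)
    (i : 'I_n) (lam : R) (x : 'cV[R]_n) (x0 : R) : Prop :=
  [/\ 0 <= x0,
      (forall k : 'I_m, (A *m x) k 0 - b k 0 * x0 <= 0),
      (forall j : 'I_n, 0 <= x j 0 /\ x j 0 <= x0),
      (forall j : 'I_n, x j 0 <= 0 \/ x0 <= x j 0) &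
      pit0 lam * x0 - dotv (pit i lam) x = -1].

Definition objective (n : nat) (p : 'cV[R]_n) (p0 : R) (x : 'cV[R]_n) (x0 : R) : R :=
  p0 * x0 - dotv p x.

Definition is_gamma_star (m n : nat) (A : 'M[R]_(m, n)) (b : 'cV[R]_m)
    (p : 'cV[R]_n) (p0 : R) (i : 'I_n) (lam : R) (g : R) : Prop :=
  (exists x x0, feasible A b i lam x x0 /\ objective p p0 x x0 = g) /\
  (forall x x0, feasible A b i lam x x0 -> g <= objective p p0 x x0).

End Defs.

(** Homogenization is harmless here: the target equation forces [x0 = 1]
    (the coordinate [x_i] lies in [[0, x0]] and is either [0] or [x0]),
    after which the disjunctions make [x] a binary point of [X] with [x_i]
    on the side violated by the target inequality.  So [gamma*] is [pi0]
    minus the maximum of [pi^T x] over that face of [X], and as [pi0] is the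
    larger of the two face maxima, the difference is [|lambda_i(pi)|]. *)
From HB Require Import structures.
From mathcomp Require Import all_boot all_order all_algebra.
From mathcomp Require Import lra.
Import Order.TTheory GRing.Theory Num.Theory.
Local Open Scope ring_scope.

Section DisjunctiveProgram.
Context {R : realFieldType}.

Lemma dotv_unitv n (i : 'I_n) (x : 'cV[R]_n) : dotv (unitv R i) x = x i 0.
Proof.
rewrite /dotv (bigD1 i) //= big1 ?addr0; first by rewrite !mxE eqxx mul1r.
by move=> j /negbTE ji; rewrite !mxE ji mul0r.
Qed.

Lemma dotvNl n (p x : 'cV[R]_n) : dotv (- p) x = - dotv p x.
Proof. by rewrite /dotv -sumrN; apply: eq_bigr => j _; rewrite !mxE mulNr. Qed.

Lemma is_max_on_union {n} {P P0 P1 : 'cV[R]_n -> Prop} {p v M0 M1} :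
  is_max_on P p v -> is_max_on P0 p M0 -> is_max_on P1 p M1 ->
  (forall x, P0 x -> P x) -> (forall x, P1 x -> P x) ->
  (forall x, P x -> P0 x \/ P1 x) ->
  v = Num.max M0 M1.
Proof.
move=> [[x Px <-] Pub] [[x0 P0x0 <-] P0ub] [[x1 P1x1 <-] P1ub] sP0 sP1 PP01.
apply/le_anti; rewrite ge_max (Pub _ (sP0 _ P0x0)) (Pub _ (sP1 _ P1x1)) !andbT le_max.
by have [/P0ub ->|/P1ub ->] := PP01 x Px; rewrite ?orbT.
Qed.

(** The value of [x_i] cut off by the target inequality. *)
Definition cut_value (lam : R) : R := if 0 < lam then 1 else 0.

Lemma pit_residual n (i : 'I_n) lam (x : 'cV[R]_n) x0 :
  pit0 lam * x0 - dotv (pit i lam) x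
    = if 0 < lam then - x i 0 else x i 0 - x0.
Proof.
rewrite /pit0 /pit; case: ifP => _; rewrite ?dotvNl dotv_unitv; lra.
Qed.

Lemma feasible_binary m n (A : 'M[R]_(m, n)) b i lam x x0 :
  feasible A b i lam x x0 ->
  [/\ x0 = 1, inX A b x & x i 0 = cut_value lam].
Proof.
case=> _ hA hbox hdisj; rewrite pit_residual /cut_value => hcut.
have [hi0 hi1] := hbox i.
have x0E : x0 = 1 by case: (hdisj i) hcut; case: ifP => _; lra.
subst x0; split=> //; last by case: ifP hcut => _; lra.
split=> [j|k]; last by have := hA k; rewrite mulr1; lra.
by have [? ?] := hbox j; case: (hdisj j) => ?; [left|right]; lra.
Qed.

Lemma binary_feasible m n (A : 'M[R]_(m, n)) b i lam x :
  inX A b x -> x i 0 = cut_value lam -> feasible A b i lam x 1.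
Proof.
move=> [hbin hA] hxi; split=> //.
- by move=> k; rewrite mulr1; have := hA k; lra.
- by move=> j; case: (hbin j) => ->; lra.
- by move=> j; case: (hbin j) => ->; [left|right]; lra.
- by rewrite pit_residual; move: hxi; rewrite /cut_value; case: ifP => _ ->; lra.
Qed.

Lemma gamma_star_face_max {m n} {A : 'M[R]_(m, n)} {b p} (p0 : R) {i} (lam : R) {M} :
  is_max_on (fun x => inX A b x /\ x i 0 = cut_value lam) p M ->
  is_gamma_star A b p p0 i lam (p0 - M).
Proof.
move=> [[x [Xx xi] <-] Mub]; split.
  by exists x, 1; rewrite /objective mulr1; split=> //; apply: binary_feasible.
move=> y y0 /feasible_binary [-> Xy yi].
by rewrite /objective mulr1 lerD2l lerN2 Mub.
Qed.

End DisjunctiveProgram.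

Theorem proposition1 (R : realFieldType) (m n : nat)
    (A : 'M[R]_(m, n)) (b : 'cV[R]_m) (p : 'cV[R]_n) (p0 : R)
    (* (a) pi^T x <= pi0 valid for X, and pi0 = max over X *)
    (Hvalid : forall x, inX A b x -> dotv p x <= p0)
    (Htight : exists2 x, inX A b x & dotv p x = p0)
    (* (b) every coordinate takes both values 0 and 1 in X *)
    (Hboth : forall j : 'I_n,
        (exists2 x, inX A b x & x j 0 = 0) /\ (exists2 x, inX A b x & x j 0 = 1))
    (i : 'I_n) (lam : R)
    (Hlam : is_lambda A b p i lam) (Hnz : lam != 0) :
  is_gamma_star A b p p0 i lam `|lam|.
Proof.
have [M0 [M1 [max0 max1 ->]]] := Hlam.
have p0E : p0 = Num.max M0 M1.
  have maxX : is_max_on (inX A b) p p0 by split.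
  apply: (is_max_on_union maxX max0 max1) => [x []|x []|x Xx] //.
  by case: (Xx.1 i); [left|right].
have [lpos|lnpos] := ltrP 0 (M0 - M1).
  have := gamma_star_face_max p0 (M0 - M1); rewrite /cut_value lpos.
  by rewrite gtr0_norm // p0E max_l; [apply | lra].
have := gamma_star_face_max p0 (M0 - M1); rewrite /cut_value ltNge lnpos /=.
by rewrite ler0_norm // p0E max_r ?opprB; [apply | lra].
Qed.
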